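(* Let $t$ be an integer with $m=2t+1\geq 11$, $n=2^m+1$, $\delta_1=\frac{n}{3}$ and $\delta_2=\frac{n-3}{6}$. If $x$ is an odd integer with $\delta_2<x\leq n-1$ and $x\neq\delta_1$, then $x$ is not a coset leader modulo $n$.
   Context: For $n=2^m+1$ and an integer $x$, the 2-cyclotomic coset of $x$ modulo $n$ is $C_x=\{x\cdot 2^{j} \bmod n : j\geq 0\}\subseteq\{0,1,\dots,n-1\}$. For $0\leq x\leq n-1$, ''$x$ is a coset leader'' means that $x$ is the smallest element of $C_x$. *)

From mathcomp Require Import all_boot.
Set Implicit Arguments. Unset Strict Implicit. Unset Printing Implicit Defensive.

Definition in_coset (n x y : nat) : Prop := exists j : nat, y = (x * 2 ^ j) %% n.

Definition coset_leader (n x : nat) : Prop :=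
  in_coset n x x /\ forall y, in_coset n x y -> x <= y.

(* Write n = 6q + 3 and a_j = x 2^j mod n. Since 2^m = -1 mod n, a_(j+m) = n - a_j; so if x
   were a coset leader, every a_j would lie in [q+1, 5q+2]. The coset {2q+1, 4q+2} of n/3 is
   never reached, and on the rest of [q+1, 5q+2] doubling mod n moves a point into or out of
   the middle third [2q+2, 4q+1] at every step. After the odd number m of steps, a_m = n - x
   would thus lie in the middle third exactly when x does not, although the middle third is
   symmetric under b |-> n - b. *)
From mathcomp Require Import all_boot.
From mathcomp Require Import zify.

Lemma expn2_odd_mod6 t : 2 ^ (2 * t + 1) = 2 %[mod 6].
Proof.
elim: t => [//|t IH].
have -> : 2 * t.+1 + 1 = (2 * t + 1) + 2 by lia.
by rewrite expnD -modnMml IH.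
Qed.

Lemma modn_double d b : b < d -> (2 * b) %% d = if 2 * b < d then 2 * b else 2 * b - d.
Proof.
move=> lt_b_d; case: ifP => lt2; first by rewrite modn_small.
have -> : 2 * b = (2 * b - d) + d by lia.
rewrite modnDr modn_small; lia.
Qed.

(* d.-1 is -1 modulo d. *)
Lemma modn_mul_pred d b : 0 < b %% d -> (b * d.-1) %% d = d - b %% d.
Proof.
case: d => [|d] r_gt0 /=; first by rewrite muln0 mod0n sub0n.
have lt_r_d : b %% d.+1 < d.+1 by rewrite ltn_pmod.
have -> : b * d = (b %/ d.+1 * d + (b %% d.+1).-1) * d.+1 + (d.+1 - b %% d.+1).
  rewrite {1}(divn_eq b d.+1).
  case: (b %% d.+1) r_gt0 lt_r_d => [//|r] _ lt_r_d /=.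
  have [s ->] : exists s, d = r + s by exists (d - r); lia.
  have -> : (r + s).+1 - r.+1 = s by lia.
  nia.
rewrite modnMDl modn_small; lia.
Qed.

Definition coset_elt (n x j : nat) : nat := x * 2 ^ j %% n.

Lemma coset_eltS n x j : coset_elt n x j.+1 = (2 * coset_elt n x j) %% n.
Proof. by rewrite /coset_elt expnS mulnCA -modnMmr mulnC. Qed.

Lemma coset_elt_antipodal m x j :
  0 < coset_elt (2 ^ m + 1) x j ->
  coset_elt (2 ^ m + 1) x (j + m) = (2 ^ m + 1) - coset_elt (2 ^ m + 1) x j.
Proof.
move=> pos; rewrite /coset_elt expnD mulnA.
have {1}-> : 2 ^ m = (2 ^ m + 1).-1 by rewrite addn1.
by rewrite modn_mul_pred.
Qed.

Section DoublingModSixQPlusThree.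

Variable q : nat.
Local Notation n := (6 * q + 3).

Definition middle_third (b : nat) : bool := (2 * q + 2 <= b) && (b <= 4 * q + 1).

Lemma middle_third_sym b : b < n -> middle_third (n - b) = middle_third b.
Proof. by move=> lt_b_n; rewrite /middle_third; apply/idP/idP => /andP[]; lia. Qed.

(* {2q+1, 4q+2} is the coset of n/3, and doubling mod n is injective *)
Lemma double_mod_third b : b < n ->
  (2 * b %% n != 2 * q + 1) && (2 * b %% n != 4 * q + 2) =
  (b != 4 * q + 2) && (b != 2 * q + 1).
Proof.
move=> lt_b_n; rewrite modn_double //.
by case: ifP => lt2; apply/idP/idP => /andP[/eqP ? /eqP ?]; apply/andP; split; apply/eqP; lia.
Qed.

Lemma double_mod_middle_third b :
  q < b -> b <= 5 * q + 2 -> b != 2 * q + 1 -> b != 4 * q + 2 ->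
  middle_third (2 * b %% n) = ~~ middle_third b.
Proof.
move=> lo hi /eqP ne1 /eqP ne2; rewrite /middle_third modn_double; last by lia.
by case: ifP => lt2; apply/idP/idP; lia.
Qed.

Variables (m x : nat).
Hypotheses (def_n : n = 2 ^ m + 1) (odd_x : odd x) (gt_x_q : q < x) (lt_x_n : x < n).
Hypothesis (x_neq_third : x != 2 * q + 1).
Hypothesis leader : forall j, x <= coset_elt n x j.

Lemma coset_elt_bounds j : q < coset_elt n x j <= 5 * q + 2.
Proof.
have lt_n : coset_elt n x j < n by apply: ltn_pmod; lia.
have := leader (j + m); rewrite def_n coset_elt_antipodal -def_n; last by have := leader j; lia.
by have := leader j; lia.
Qed.

Lemma coset_elt_off_third j :
  (coset_elt n x j != 2 * q + 1) && (coset_elt n x j != 4 * q + 2).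
Proof.
elim: j => [|j IH].
  rewrite /coset_elt expn0 muln1 modn_small // x_neq_third /=.
  by apply: contraTneq odd_x => ->; rewrite oddD oddM.
by rewrite coset_eltS double_mod_third 1?andbC //; apply: ltn_pmod; lia.
Qed.

Lemma middle_third_coset_elt j :
  middle_third (coset_elt n x j) = middle_third x (+) odd j.
Proof.
elim: j => [|j IH]; first by rewrite /coset_elt expn0 muln1 modn_small // addbF.
have /andP[lo hi] := coset_elt_bounds j; have /andP[ne1 ne2] := coset_elt_off_third j.
by rewrite coset_eltS double_mod_middle_third // IH /= addbN.
Qed.

Lemma coset_leader_period_even : ~~ odd m.
Proof.
apply/negP => odd_m; have := middle_third_coset_elt m.
rewrite -[m]add0n def_n coset_elt_antipodal -def_n; last by have := leader 0; lia.
rewrite /coset_elt expn0 muln1 modn_small // middle_third_sym // odd_m.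
by case: (middle_third x).
Qed.

End DoublingModSixQPlusThree.

Theorem lemma3p4 (t m n x : nat) :
  m = 2 * t + 1 -> 11 <= m -> n = 2 ^ m + 1 ->
  odd x -> (n - 3) %/ 6 < x -> x <= n - 1 -> x <> n %/ 3 ->
  ~ coset_leader n x.
Proof.
move=> def_m _ def_n odd_x gt_x_lo le_x_hi neq_x_third [_ leader].
have [q def_n6] : exists q, n = 6 * q + 3.
  have n_mod6 : n %% 6 = 3 by rewrite def_n -modnDml def_m expn2_odd_mod6.
  by exists (n %/ 6); lia.
have leader_elt j : x <= coset_elt n x j by apply: leader; exists j.
rewrite def_n6 in def_n gt_x_lo le_x_hi neq_x_third leader_elt.
have gt_x_q : q < x by lia.
have lt_x_n : x < 6 * q + 3 by lia.
have x_neq_third : x != 2 * q + 1 by apply/eqP; lia.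
have := @coset_leader_period_even q m x def_n odd_x gt_x_q lt_x_n x_neq_third leader_elt.
by rewrite def_m oddD oddM.
Qed.
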